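(* Let $P$ be an irreducible positive recurrent stochastic kernel on a countable set $I$ with stationary distribution $\pi$, let $\widetilde{P}$ be a stochastic kernel on a countable set $\widetilde{I}$ and $\Lambda=(\Lambda(\widetilde{x},x):\widetilde{x}\in\widetilde{I},x\in I)$ a stochastic matrix with $\widetilde{P}\Lambda=\Lambda P$. Define the kernel $\underline{P}$ on $I\times\widetilde{I}$ by $$\underline{P}\big((x,\widetilde{x}),(y,\widetilde{y})\big)=\frac{P(x,y)\,\widetilde{P}(\widetilde{x},\widetilde{y})\,\Lambda(\widetilde{y},y)}{(\Lambda P)(\widetilde{x},y)}\,\mathbf{1}\big((\Lambda P)(\widetilde{x},y)>0\big),$$ and let $(X,\widetilde{X})$ be the Markov chain with kernel $\underline{P}$. Fix $\widetilde{\partial}\in\widetilde{I}$. Assume $\widetilde{\mu}$ is a quasi-stationary distribution for the chain $\widetilde{X}$ (with kernel $\widetilde{P}$) with forbidden state $\widetilde{\partial}$. Then the probability measure $$\underline{\mu}(x_0,\widetilde{x}_0)=\widetilde{\mu}(\widetilde{x}_0)\,\Lambda(\widetilde{x}_0,x_0),\qquad (x_0,\widetilde{x}_0)\in I\times(\widetilde{I}\setminus\{\widetilde{\partial}\}),$$ is a quasi-stationary distribution for $(X,\widetilde{X})$ with forbidden set $\underline{\partial}=I\times\{\widetilde{\partial}\}$.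
   Context: For a Markov chain $Y=(Y_n)_{n\ge0}$ on a countable set $J$ with stochastic kernel $Q$ and a nonempty proper subset $K\subset J$ with hitting time $\tau_K=\inf\{n\ge0:Y_n\in K\}$, a probability measure $\mu$ on $J\setminus K$ is a quasi-stationary distribution (q.s.d.) for $Y$ with forbidden set $K$ if $\mathbb{P}_\mu(Y_n=j\mid\tau_K>n)=\mu(j)$ for all $j\in J\setminus K$ and all $n\ge0$; equivalently, there is $\gamma$ with $\sum_{i\in J\setminus K}\mu(i)Q(i,j)=\gamma\mu(j)$ for all $j\in J\setminus K$. $\mathbb{P}_\mu$ is the law of the chain with initial distribution $\mu$. *)

From HB Require Import structures.
From mathcomp Require Import all_boot all_order all_algebra.
From mathcomp Require Import all_classical all_reals all_analysis.
Set Implicit Arguments. Unset Strict Implicit. Unset Printing Implicit Defensive.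
Import Order.TTheory GRing.Theory Num.Theory.
Local Open Scope classical_set_scope.
Local Open Scope ring_scope.

Section Kernels.
Variable R : realType.

Definition mc_comp (A B C : countType) (M : A -> B -> R) (N : B -> C -> R) : A -> C -> R :=
  fun a c => fine (\esum_(b in [set: B]) (M a b * N b c)%:E).

Definition mc_id (A : countType) : A -> A -> R := fun a b => (a == b)%:R.

Fixpoint mc_pow (A : countType) (n : nat) (M : A -> A -> R) : A -> A -> R :=
  match n with
  | 0 => mc_id (A:=A)
  | n'.+1 => mc_comp (mc_pow n' M) M
  end.

Definition mc_stochastic (A B : countType) (M : A -> B -> R) : Prop :=
  (forall a b, 0 <= M a b) /\ (forall a, \esum_(b in [set: B]) (M a b)%:E = 1%E).

Definition mc_prob (A : countType) (m : A -> R) : Prop :=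
  (forall a, 0 <= m a) /\ \esum_(a in [set: A]) (m a)%:E = 1%E.

Definition mc_taboo (A : countType) (Q : A -> A -> R) (K : set A) : A -> A -> R :=
  fun i j => if `[< K j >] then 0 else Q i j.

Definition mc_irreducible (A : countType) (P : A -> A -> R) : Prop :=
  forall x y, exists n, 0 < mc_pow n P x y.

(* P_x(T_x^+ > n) = sum_z (mc_taboo P {x})^n (x,z), T_x^+ = inf{n >= 1 : X_n = x} *)
Definition ret_tail (A : countType) (P : A -> A -> R) (x : A) (n : nat) : R :=
  fine (\esum_(z in [set: A]) (mc_pow n (mc_taboo P [set x]) x z)%:E).

(* positive recurrence: E_x[T_x^+] = sum_n P_x(T_x^+ > n) < +oo for every x *)
Definition mc_positive_recurrent (A : countType) (P : A -> A -> R) : Prop :=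
  forall x, (\sum_(0 <= n <oo) (ret_tail P x n)%:E < +oo)%E.

Definition mc_stationary (A : countType) (P : A -> A -> R) (pi : A -> R) : Prop :=
  mc_prob pi /\
  forall y, \esum_(x in [set: A]) (pi x * P x y)%:E = (pi y)%:E.

(* P_mu(Y_n = j, tau_K > n) *)
Definition surv_prob (J : countType) (Q : J -> J -> R) (K : set J) (mu : J -> R)
  (n : nat) (j : J) : R :=
  fine (\esum_(i in [set: J]) (mu i * mc_pow n (mc_taboo Q K) i j)%:E).

(* P_mu(tau_K > n) *)
Definition surv_total (J : countType) (Q : J -> J -> R) (K : set J) (mu : J -> R)
  (n : nat) : R :=
  fine (\esum_(j in ~` K) (surv_prob Q K mu n j)%:E).

Definition mc_qsd (J : countType) (Q : J -> J -> R) (K : set J) (mu : J -> R) : Prop :=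
  [/\ forall j, 0 <= mu j,
      forall j, K j -> mu j = 0,
      \esum_(j in ~` K) (mu j)%:E = 1%E &
      forall n, 0 < surv_total Q K mu n /\
        forall j, ~ K j -> surv_prob Q K mu n j / surv_total Q K mu n = mu j].

Definition coupled_kernel (I It : countType) (P : I -> I -> R) (Pt : It -> It -> R)
  (Lam : It -> I -> R) : (I * It)%type -> (I * It)%type -> R :=
  fun p q =>
    let LP := mc_comp Lam P p.2 q.1 in
    if 0 < LP then P p.1 q.1 * Pt p.2 q.2 * Lam q.2 q.1 / LP else 0.

End Kernels.

From HB Require Import structures.
From mathcomp Require Import all_boot all_order all_algebra.
From mathcomp Require Import all_classical all_reals all_analysis.
From mathcomp Require Import ring.
Import Order.TTheory GRing.Theory Num.Theory.
Set Implicit Arguments. Unset Strict Implicit. Unset Printing Implicit Defensive.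
Local Open Scope classical_set_scope.
Local Open Scope ring_scope.

(* Averaging the coupled kernel over x against Lam(xt, .) gives
   Pt(xt, yt) Lam(yt, y), because sum_x Lam(xt, x) P(x, y) = (Lam P)(xt, y) is exactly its
   denominator.  Killing the coupled chain when its second coordinate hits dt therefore
   intertwines with killing the chain of Pt, and by induction the killed law of the coupled
   chain started from mut(yt) Lam(yt, y) is, at every time n, nu_n(yt) Lam(yt, y), where nu_n
   is the killed law of the chain of Pt started from mut.  Summing out y (Lam is stochastic)
   shows both chains survive with the same probability, so the conditioned law at time n
   is mut(yt) Lam(yt, y) again. *)

Section ExtendedSums.
Variable R : realType.
Local Open Scope ereal_scope.

Lemma esumZl (T : choiceType) (S : set T) (c : R) (a : T -> \bar R) :
  (0 <= c)%R -> (forall i, 0 <= a i) ->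
  \esum_(i in S) (c%:E * a i) = c%:E * \esum_(i in S) a i.
Proof.
move=> c0 a0; rewrite /esum -ereal_supZl //; last first.
  by apply/set0P; exists 0, set0; [exact: fsets_set0|rewrite fsbig_set0].
rewrite image_comp; congr ereal_sup.
by apply: eq_imagel => A _ /=; rewrite ge0_mule_fsumr.
Qed.

Lemma esum_ge_term (T : choiceType) (a : T -> \bar R) j :
  (forall i, 0 <= a i) -> a j <= \esum_(i in [set: T]) a i.
Proof.
move=> a0; apply: esum_ge; exists [set j]; first by split => //; exact: finite_set1.
by rewrite fsbig_set1.
Qed.

Lemma esum_swap (T1 T2 : choiceType) (f : T1 -> T2 -> \bar R) :
  (forall i j, 0 <= f i j) ->
  \esum_(i in [set: T1]) \esum_(j in [set: T2]) f i j =
  \esum_(j in [set: T2]) \esum_(i in [set: T1]) f i j.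
Proof.
move=> f0; rewrite !esum_esum //.
have XT (U V : choiceType) : [set: U] `*`` (fun=> [set: V]) = setT by apply/seteqP.
rewrite !XT (@reindex_esum _ _ _ setT setT (fun k => (k.2, k.1))) //.
by rewrite setTT_bijective; exists (fun k => (k.2, k.1)); case.
Qed.

Lemma esum_pair (A B : choiceType) (f : A * B -> \bar R) : (forall p, 0 <= f p) ->
  \esum_(p in [set: A * B]) f p = \esum_(a in [set: A]) \esum_(b in [set: B]) f (a, b).
Proof.
move=> f0; rewrite esum_esum //.
have -> : [set: A] `*`` (fun _ => [set: B]) = [set: A * B] by apply/seteqP.
by apply: eq_esum => -[a b].
Qed.

Lemma esumT_single (T : choiceType) (a : T -> \bar R) j :
  (forall i, i != j -> a i = 0) -> 0 <= a j -> \esum_(i in [set: T]) a i = a j.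
Proof.
move=> a0 aj; rewrite (esumID [set j]); last first.
  by move=> i _; have [->|/a0 ->] := eqVneq i j.
rewrite setTI esum_set1 // esum1 ?adde0 // => i [_ /eqP]; exact: a0.
Qed.

Lemma esumT_setC (T : choiceType) (K : set T) (a : T -> \bar R) :
  (forall j, K j -> a j = 0) -> (forall j, 0 <= a j) ->
  \esum_(j in [set: T]) a j = \esum_(j in ~` K) a j.
Proof.
move=> aK a0; rewrite (esumID K) // !setTI esum1 ?add0e // => j /aK.
Qed.

End ExtendedSums.

Section Substochastic.
Variable R : realType.
Local Open Scope ereal_scope.

Definition substochastic (A B : countType) (M : A -> B -> R) : Prop :=
  (forall a b, 0 <= M a b)%R /\ (forall a, \esum_(b in [set: B]) (M a b)%:E <= 1).

Lemma stochastic_substochastic (A B : countType) (M : A -> B -> R) :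
  mc_stochastic M -> substochastic M.
Proof. by move=> [M0 M1]; split => // a; rewrite M1. Qed.

Lemma substochastic_le1 (A B : countType) (M : A -> B -> R) a b :
  substochastic M -> (M a b <= 1)%R.
Proof.
move=> [M0 M1]; rewrite -lee_fin; apply: le_trans (M1 a).
by apply: (@esum_ge_term _ _ (fun b => (M a b)%:E)) => i; rewrite lee_fin.
Qed.

Lemma mc_compE (A B C : countType) (M : A -> B -> R) (N : B -> C -> R) a c :
  substochastic M -> substochastic N ->
  (mc_comp M N a c)%:E = \esum_(b in [set: B]) (M a b * N b c)%:E.
Proof.
move=> [M0 M1] sN; have MN0 b : 0 <= (M a b * N b c)%:E.
  by rewrite lee_fin mulr_ge0 //; apply: sN.1.
rewrite /mc_comp fineK // ge0_fin_numE ?esum_ge0 //.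
apply: le_lt_trans (ltry 1%R); apply: le_trans (M1 a); apply: le_esum => b _.
by rewrite lee_fin ler_piMr //; exact: substochastic_le1.
Qed.

Lemma substochastic_comp (A B C : countType) (M : A -> B -> R) (N : B -> C -> R) :
  substochastic M -> substochastic N -> substochastic (mc_comp M N).
Proof.
move=> sM sN; have MN0 a b c : 0 <= (M a b * N b c)%:E.
  by rewrite lee_fin mulr_ge0 //; [apply: sM.1|apply: sN.1].
split=> [a c|a]; first by rewrite -lee_fin mc_compE // esum_ge0.
under eq_esum do rewrite mc_compE //.
rewrite esum_swap //; apply: le_trans (sM.2 a); apply: le_esum => b _.
under eq_esum do rewrite EFinM.
rewrite esumZl; [|exact: sM.1|by move=> c; rewrite lee_fin; apply: sN.1].
by rewrite -[leRHS]mule1 lee_wpmul2l ?lee_fin //; [apply: sM.1|apply: sN.2].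
Qed.

Lemma substochastic_id (A : countType) : substochastic (@mc_id R A).
Proof.
split=> [a b|a]; first by rewrite ler0n.
rewrite (esumT_single (j := a)) /mc_id ?eqxx //.
by move=> i /negbTE; rewrite eq_sym => ->.
Qed.

Lemma substochastic_pow (A : countType) (M : A -> A -> R) n :
  substochastic M -> substochastic (mc_pow n M).
Proof.
by move=> sM; elim: n => [|n IH] /=; [exact: substochastic_id|exact: substochastic_comp].
Qed.

Lemma substochastic_taboo (A : countType) (M : A -> A -> R) K :
  substochastic M -> substochastic (mc_taboo M K).
Proof.
move=> [M0 M1]; split=> [a b|a]; first by rewrite /mc_taboo; case: ifP.
by apply: le_trans (M1 a); apply: le_esum => b _; rewrite /mc_taboo lee_fin; case: ifP.
Qed.

(* Summability of [m] makes the intermediate row vector finite, so the [fine] on the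
   right loses nothing. *)
Lemma esum_mul_comp (A : countType) (m : A -> R) (M N : A -> A -> R) j :
  (forall i, 0 <= m i)%R -> \esum_(i in [set: A]) (m i)%:E < +oo ->
  substochastic M -> substochastic N ->
  \esum_(i in [set: A]) (m i * mc_comp M N i j)%:E =
  \esum_(k in [set: A]) (fine (\esum_(i in [set: A]) (m i * M i k)%:E) * N k j)%:E.
Proof.
move=> m0 m_fin sM sN; have [M0 _] := sM; have [N0 _] := sN.
transitivity (\esum_(i in [set: A]) \esum_(k in [set: A])
                 ((m i)%:E * ((M i k)%:E * (N k j)%:E))).
  apply: eq_esum => i _; rewrite EFinM mc_compE // -esumZl //.
  by move=> k; rewrite lee_fin mulr_ge0.
rewrite esum_swap; last by move=> i k; rewrite -!EFinM lee_fin !mulr_ge0.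
apply: eq_esum => k _; rewrite EFinM fineK; last first.
  rewrite ge0_fin_numE ?esum_ge0 // => [|i _]; last by rewrite lee_fin mulr_ge0.
  apply: le_lt_trans m_fin; apply: le_esum => i _.
  by rewrite lee_fin ler_piMr //; exact: substochastic_le1.
rewrite muleC -esumZl // => [|i]; last by rewrite lee_fin mulr_ge0.
by apply: eq_esum => i _; rewrite -!EFinM; congr (_%:E); ring.
Qed.

End Substochastic.

Section SurvivalProbabilities.
Variable R : realType.
Local Open Scope ereal_scope.
Variables (J : countType) (Q : J -> J -> R) (K : set J) (mu : J -> R).
Hypotheses (sQ : substochastic Q) (mu0 : forall j, (0 <= mu j)%R).

Lemma surv_prob_ge0 n j : (0 <= surv_prob Q K mu n j)%R.
Proof.
apply: fine_ge0; apply: esum_ge0 => i _; rewrite lee_fin mulr_ge0 //.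
exact: (substochastic_pow n (substochastic_taboo K sQ)).1.
Qed.

Lemma surv_prob0 j : surv_prob Q K mu 0 j = mu j.
Proof.
rewrite /surv_prob /= (esumT_single (j := j)) /mc_id ?eqxx ?mulr1 ?lee_fin //.
by move=> i /negbTE ->; rewrite mulr0.
Qed.

Lemma surv_probS n j : \esum_(i in [set: J]) (mu i)%:E < +oo ->
  (surv_prob Q K mu n.+1 j)%:E =
  \esum_(k in [set: J]) (surv_prob Q K mu n k * mc_taboo Q K k j)%:E.
Proof.
move=> mu_fin; have sT := substochastic_taboo K sQ.
rewrite /surv_prob /= fineK; first by rewrite esum_mul_comp //; exact: substochastic_pow.
rewrite ge0_fin_numE ?esum_ge0 // => [|i _]; last first.
  by rewrite lee_fin mulr_ge0 //; exact: (substochastic_pow n.+1 sT).1.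
apply: le_lt_trans mu_fin; apply: le_esum => i _.
by rewrite lee_fin ler_piMr //; exact: (substochastic_le1 _ _ (substochastic_pow n.+1 sT)).
Qed.

End SurvivalProbabilities.

Section Coupling.
Variables (R : realType) (I It : countType).
Variables (P : I -> I -> R) (Pt : It -> It -> R) (Lam : It -> I -> R).
Hypotheses (sP : mc_stochastic P) (sPt : mc_stochastic Pt) (sLam : mc_stochastic Lam).
Hypothesis intertwining : mc_comp Pt Lam = mc_comp Lam P.
Local Open Scope ereal_scope.

Let P_ge0 := (stochastic_substochastic sP).1.
Let Pt_ge0 := (stochastic_substochastic sPt).1.
Let Lam_ge0 := (stochastic_substochastic sLam).1.

Let LamPE xt y :
  (mc_comp Lam P xt y)%:E = \esum_(x in [set: I]) (Lam xt x * P x y)%:E.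
Proof. by rewrite mc_compE //; exact: stochastic_substochastic. Qed.

Let LamP_PtLamE xt y :
  (mc_comp Lam P xt y)%:E = \esum_(z in [set: It]) (Pt xt z * Lam z y)%:E.
Proof. by rewrite -intertwining mc_compE //; exact: stochastic_substochastic. Qed.

Lemma coupled_kernel_ge0 p q : (0 <= coupled_kernel P Pt Lam p q)%R.
Proof.
rewrite /coupled_kernel; case: ifP => // /ltW LP0.
by rewrite divr_ge0 // !mulr_ge0.
Qed.

(* Where (Lam P)(xt, y) vanishes, so does Pt(xt, yt) Lam(yt, y) <= (Pt Lam)(xt, y). *)
Lemma esum_Lam_coupled_kernel xt y yt :
  \esum_(x in [set: I]) (Lam xt x * coupled_kernel P Pt Lam (x, xt) (y, yt))%:E =
  (Pt xt yt * Lam yt y)%:E.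
Proof.
rewrite /coupled_kernel /=; have [LP_gt0|LP_le0] := boolP (0 < mc_comp Lam P xt y)%R.
  pose c := (Pt xt yt * Lam yt y / mc_comp Lam P xt y)%R.
  rewrite (eq_esum (b := fun x => c%:E * (Lam xt x * P x y)%:E)) => [|x _]; last first.
    by rewrite -EFinM; congr (_%:E); rewrite /c; ring.
  have LamP0 x : 0 <= (Lam xt x * P x y)%:E by rewrite lee_fin mulr_ge0.
  rewrite esumZl // ?divr_ge0 ?mulr_ge0 ?(ltW LP_gt0) //.
  by rewrite -LamPE -EFinM divfK ?gt_eqF.
rewrite esum1 => [|x _]; last by rewrite mulr0.
have LP0 : mc_comp Lam P xt y = 0%R.
  apply/eqP; rewrite eq_le leNgt LP_le0 -lee_fin LamPE esum_ge0 // => x _.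
  by rewrite lee_fin mulr_ge0.
suff PtLam_le0 : (Pt xt yt * Lam yt y <= 0)%R.
  by congr (_%:E); apply/eqP; rewrite eq_sym eq_le PtLam_le0 mulr_ge0.
rewrite -LP0 -lee_fin LamP_PtLamE.
by apply: (@esum_ge_term _ _ (fun z => (Pt xt z * Lam z y)%:E)) => z; rewrite lee_fin mulr_ge0.
Qed.

Lemma coupled_kernel_substochastic : substochastic (coupled_kernel P Pt Lam).
Proof.
split=> [|[x xt]]; first exact: coupled_kernel_ge0.
rewrite esum_pair => [|p]; last by rewrite lee_fin coupled_kernel_ge0.
rewrite -(sP.2 x); apply: le_esum => y _; rewrite /coupled_kernel /=.
have [LP_gt0|_] := boolP (0 < mc_comp Lam P xt y)%R; last by rewrite esum1 ?lee_fin.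
pose c := (P x y / mc_comp Lam P xt y)%R.
rewrite (eq_esum (b := fun yt => c%:E * (Pt xt yt * Lam yt y)%:E)) => [|yt _]; last first.
  by rewrite -EFinM; congr (_%:E); rewrite /c; ring.
have PtLam0 yt : 0 <= (Pt xt yt * Lam yt y)%:E by rewrite lee_fin mulr_ge0.
rewrite esumZl // ?divr_ge0 ?(ltW LP_gt0) //.
by rewrite -LamP_PtLamE -EFinM divfK ?gt_eqF.
Qed.

Lemma esum_snd_marginal (w : It -> R) (S : set It) : (forall z, 0 <= w z)%R ->
  \esum_(p in [set p : I * It | S p.2]) (w p.2 * Lam p.2 p.1)%:E = \esum_(z in S) (w z)%:E.
Proof.
move=> w0; have wLam0 y z : 0 <= (w z * Lam z y)%:E by rewrite lee_fin mulr_ge0.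
rewrite esum_mkcond esum_pair => [|p]; last by case: ifP.
rewrite esum_swap => [|y z]; last by case: ifP.
rewrite [RHS]esum_mkcond; apply: eq_esum => z _.
have mem_snd y : ((y, z) \in [set p : I * It | S p.2]) = (z \in S).
  by apply/idP/idP => /set_mem ?; apply/mem_set.
under eq_esum do rewrite mem_snd.
case: (z \in S); last by rewrite esum1.
under eq_esum do rewrite /= EFinM.
by rewrite esumZl ?sLam.2 ?mule1 // => y; rewrite lee_fin.
Qed.

Variable dt : It.

Lemma coupled_taboo_step (nu : It -> R) y yt : (forall z, 0 <= nu z)%R ->
  \esum_(p in [set: I * It])
     (nu p.2 * Lam p.2 p.1 * mc_taboo (coupled_kernel P Pt Lam) [set p | p.2 = dt] p (y, yt))%:E
  = (Lam yt y)%:E * \esum_(xt in [set: It]) (nu xt * mc_taboo Pt [set dt] xt yt)%:E.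
Proof.
move=> nu0; rewrite /mc_taboo; have [->|/eqP yt_dt] := eqVneq yt dt.
  by rewrite !asboolT // !esum1 ?mule0 // => *; rewrite mulr0.
rewrite !asboolF //; have C0 := coupled_kernel_ge0.
rewrite esum_pair => [|p]; last by rewrite lee_fin !mulr_ge0.
rewrite esum_swap => [|x xt]; last by rewrite lee_fin !mulr_ge0.
rewrite -esumZl // => [|xt]; last by rewrite lee_fin mulr_ge0.
apply: eq_esum => xt _; under eq_esum do rewrite /= -mulrA EFinM.
rewrite esumZl // => [|x]; last by rewrite lee_fin mulr_ge0.
by rewrite esum_Lam_coupled_kernel -!EFinM; congr (_%:E); ring.
Qed.

Variable mut : It -> R.
Hypotheses (mut0 : forall z, (0 <= mut z)%R) (mut_fin : \esum_(z in [set: It]) (mut z)%:E < +oo).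

Lemma coupled_surv_prob n q :
  surv_prob (coupled_kernel P Pt Lam) [set p | p.2 = dt] (fun p => mut p.2 * Lam p.2 p.1)%R
    n q = (surv_prob Pt [set dt] mut n q.2 * Lam q.2 q.1)%R.
Proof.
have sC := coupled_kernel_substochastic; have sPt_sub := stochastic_substochastic sPt.
have mu0 p : (0 <= mut p.2 * Lam p.2 p.1)%R by rewrite mulr_ge0.
have mu_fin : \esum_(p in [set: I * It]) (mut p.2 * Lam p.2 p.1)%:E < +oo.
  by change (\esum_(p in [set p : I * It | [set: It] p.2]) (mut p.2 * Lam p.2 p.1)%:E < +oo);
    rewrite esum_snd_marginal.
elim: n q => [|n IH] [y yt]; first by rewrite !surv_prob0.
apply: EFin_inj; rewrite surv_probS //.
under eq_esum do rewrite IH.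
rewrite coupled_taboo_step -?(surv_probS (Q := Pt)) // => [|z]; last exact: surv_prob_ge0.
by rewrite -EFinM mulrC.
Qed.

End Coupling.

Theorem proposition7 (R : realType) (I It : countType)
  (P : I -> I -> R) (pi : I -> R) (Pt : It -> It -> R) (Lam : It -> I -> R)
  (dt : It) (mut : It -> R) :
  mc_stochastic P -> mc_irreducible P -> mc_positive_recurrent P -> mc_stationary P pi ->
  mc_stochastic Pt -> mc_stochastic Lam ->
  mc_comp Pt Lam = mc_comp Lam P ->
  mc_qsd Pt [set dt] mut ->
  mc_qsd (coupled_kernel P Pt Lam) [set p | p.2 = dt]
      (fun p : I * It => if p.2 == dt then 0 else mut p.2 * Lam p.2 p.1).
Proof.
move=> sP _ _ _ sPt sLam intertwining [mut0 mutK mut1 mutq].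
have mutdt : mut dt = 0 by apply: mutK.
have mut_fin : (\esum_(z in [set: It]) (mut z)%:E < +oo)%E.
  by rewrite (esumT_setC (K := [set dt])) ?mut1 ?ltry // => z ->; rewrite mutdt.
have -> : (fun p : I * It => if p.2 == dt then 0 else mut p.2 * Lam p.2 p.1) =
          (fun p => mut p.2 * Lam p.2 p.1).
  by apply/funext => -[y yt] /=; case: eqP => // ->; rewrite mutdt mul0r.
have K_snd : ~` [set p : I * It | p.2 = dt] = [set p | (~` [set dt]) p.2] by [].
have surv_total_eq n : surv_total (coupled_kernel P Pt Lam) [set p | p.2 = dt]
    (fun p => mut p.2 * Lam p.2 p.1) n = surv_total Pt [set dt] mut n.
  rewrite /surv_total K_snd; under eq_esum do rewrite coupled_surv_prob //.
  rewrite esum_snd_marginal // => z; apply: surv_prob_ge0 => //.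
  exact: stochastic_substochastic.
split=> [p|[y yt] /= ->||n].
- by rewrite mulr_ge0 //; apply: sLam.1.
- by rewrite mutdt mul0r.
- by rewrite K_snd esum_snd_marginal.
- have [tot_gt0 cond] := mutq n; split=> [|[y yt] /= yt_dt]; first by rewrite surv_total_eq.
  by rewrite surv_total_eq coupled_surv_prob //= mulrAC cond.
Qed.
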